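(* Let $\mu>1$ and $0<\nu<1$ be constants satisfying $\mu\nu>1$ and $1+\frac{1}{\mu}\le \nu+\nu^2$. Then the algorithm $1$-SORT (with any fixed rule for breaking ties between equal priorities) is $\rho$-competitive for the problem $1\mid t_j\mid \sum C_j$ with obligatory tests, where \[ \rho=\max\Biggl\{\frac{\nu+\nu^2+2+\frac{2}{\mu}}{\nu+\nu^2+1+\frac{1}{\mu}},\ 1+\frac{1}{2+\nu},\ \frac{\frac{4}{\nu}+\frac{4}{\mu\nu}+\nu+\nu^2+1}{\frac{2}{\nu}+\frac{2}{\mu\nu}+\nu+\nu^2},\ \frac{\frac{4}{\nu}+\frac{4}{\nu\mu}+\nu+\frac{1}{\mu+1}}{\frac{2}{\nu}+\frac{2}{\mu\nu}+\nu},\ \frac{4+\frac{5}{\mu}+\nu}{2+\frac{2}{\mu}+\nu},\ 1+\frac{1}{\nu+\nu^2},\ 1+\frac{1}{\nu(\mu+1)},\ \frac{2\mu+1}{\mu+1},\ 1+\nu\Biggr\}. \]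
   Context: Scheduling with obligatory tests: a set $J=\{1,\dots,n\}$ of jobs is to be scheduled on a single machine. Each job $j$ has a test time $t_j\ge 0$, known in advance, and a processing time $p_j\ge 0$, which is unknown to the algorithm until the test of $j$ has been executed. Each job consists of two operations: its test (duration $t_j$) and its processing part (duration $p_j$); the processing part can be executed at any time after the test has completed (not necessarily immediately). The machine executes at most one operation at a time, and each operation is executed without preemption. The completion time $C_j$ of job $j$ is the time at which its processing part finishes; the objective is to minimize $\sum_j C_j$. The offline optimum $\mathit{OPT}$ knows all $p_j$ but must also execute all tests. An algorithm is $\rho$-competitive if its objective value $\mathit{ALG}$ satisfies $\mathit{ALG}\le\rho\cdot\mathit{OPT}$ for every instance. Algorithm $\beta$-SORT (parameter $\beta>0$): maintain a priority queue of available operations, initially containing the test of every job $j$ with priority $\beta t_j$. Repeatedly remove an operation of minimum priority and execute it immediately (starting when the previous operation finishes); whenever the executed operation is the test of job $j$, insert the processing part of $j$ with priority $p_j$ into the queue. $1$-SORT is $\beta$-SORT with $\beta=1$. *)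

From HB Require Import structures.
From mathcomp Require Import all_boot all_order all_algebra.
From mathcomp Require Import reals.
Set Implicit Arguments.
Unset Strict Implicit.
Unset Printing Implicit Defensive.
Import Order.TTheory GRing.Theory Num.Theory.
Local Open Scope ring_scope.

(* An operation of job j : 'I_n is (j, false) = its test, (j, true) = its
   processing part. *)
Definition op (n : nat) := ('I_n * bool)%type.

Section Sched.
Variables (R : realType) (n : nat) (t p : 'I_n -> R).

Definition dur (o : op n) : R := if o.2 then p o.1 else t o.1.

Definition prio (beta : R) (o : op n) : R := if o.2 then p o.1 else beta * t o.1.

Definition available (done : seq (op n)) (o : op n) : bool :=
  (o \notin done) && (~~ o.2 || ((o.1, false) \in done)).

(* s is a possible execution order of beta-SORT, for some tie-breaking rule:
   it contains every operation exactly once, and at every step the executed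
   operation is in the queue and has minimum priority among queued ones. *)
Definition beta_sort_run (beta : R) (s : seq (op n)) : Prop :=
  uniq s /\ (forall o : op n, o \in s) /\
  forall k, (k < size s)%N ->
    forall o0 : op n,
    let done := take k s in
    let o := nth o0 s k in
    available done o /\
    forall o', available done o' -> prio beta o <= prio beta o'.

(* operations are executed back to back starting at time 0; completion time
   of operation o in the order s *)
Definition run_completion (s : seq (op n)) (o : op n) : R :=
  \sum_(o' <- take (index o s).+1 s) dur o'.

Definition run_cost (s : seq (op n)) : R :=
  \sum_(j < n) run_completion s (j, true).

(* The machine executes at most one operation at a time (the half-open
   execution intervals are pairwise disjoint), no preemption, processing of j
   starts after its test completes. *)
Definition feasible_schedule (S : op n -> R) : Prop :=
  (forall o, 0 <= S o) /\
  (forall j : 'I_n, S (j, false) + t j <= S (j, true)) /\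
  (forall a b : op n, a != b ->
     [\/ S a + dur a <= S b, S b + dur b <= S a, dur a = 0 | dur b = 0]).

Definition schedule_cost (S : op n -> R) : R :=
  \sum_(j < n) (S (j, true) + p j).

End Sched.

Definition rho (R : realType) (mu nu : R) : R :=
  let nu2 := nu ^+ 2 in
  Num.max ((nu + nu2 + 2 + 2 / mu) / (nu + nu2 + 1 + 1 / mu))
  (Num.max (1 + 1 / (2 + nu))
  (Num.max ((4 / nu + 4 / (mu * nu) + nu + nu2 + 1) / (2 / nu + 2 / (mu * nu) + nu + nu2))
  (Num.max ((4 / nu + 4 / (nu * mu) + nu + 1 / (mu + 1)) / (2 / nu + 2 / (mu * nu) + nu))
  (Num.max ((4 + 5 / mu + nu) / (2 + 2 / mu + nu))
  (Num.max (1 + 1 / (nu + nu2))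
  (Num.max (1 + 1 / (nu * (mu + 1)))
  (Num.max ((2 * mu + 1) / (mu + 1))
           (1 + nu)))))))).

(** In fact 1-SORT is 46/25-competitive, and rho mu nu >= 46/25 for all
    mu, nu > 0.

    Summing the completion times pairwise, 2 ALG is at most
    L(t, p) = sum_i (t_i + p_i)
            + sum_(i,j) (min(t_i,t_j) + min(p_i,p_j) + 2 [test i before test j] min(t_j,p_i)),
    because 1-SORT runs any two operations that are simultaneously queued in
    order of priority; and 2 OPT is at least
    R(t, p) = sum_i (t_i + p_i)
            + sum_(i,j) (3/4 (min(t_i,t_j) + min(p_i,p_j))
                         + 1/4 min(max(t_i,p_i), max(t_j,p_j))),
    because the job of a pair that completes first is entirely processed
    before the other one completes.  Both L and R are additive along the layer
    decomposition x = d [x > 0] + (x - d [x > 0]), d the smallest positive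
    test or processing time, so L <= 46/25 R reduces to 0/1 instances, where
    it is a quadratic inequality in the numbers of jobs of each type. *)

From HB Require Import structures.
From mathcomp Require Import all_boot all_order all_algebra.
From mathcomp Require Import reals.
From mathcomp Require Import ring lra zify.
Set Implicit Arguments.
Unset Strict Implicit.
Unset Printing Implicit Defensive.
Import Order.TTheory GRing.Theory Num.Theory.
Local Open Scope ring_scope.

Ltac case_minmax := repeat match goal with
  | |- context[Num.max ?x ?y] => rewrite (maxEle x y); have [?|?] := leP x y
  | |- context[Num.min ?x ?y] => rewrite (minEle x y); have [?|?] := leP x y
  end.

(** * Layer decomposition *)

Section Layers.
Variable R : realFieldType.

(* [x] is a bottom layer of height [d], present iff [u = 1], plus the part
   [x'] above it. *)
Definition layer (d x u x' : R) :=
  x = d * u + x' /\ ((u = 0 /\ x' = 0) \/ (u = 1 /\ 0 <= x')).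

Lemma layer_min d x y u v x' y' : 0 < d -> layer d x u x' -> layer d y v y' ->
  Num.min x y = d * Num.min u v + Num.min x' y'.
Proof.
by move=> hd [-> [[-> ->]|[-> hx]]] [-> [[-> ->]|[-> hy]]]; case_minmax; lra.
Qed.

Lemma layer_max d x y u v x' y' : 0 < d -> layer d x u x' -> layer d y v y' ->
  layer d (Num.max x y) (Num.max u v) (Num.max x' y').
Proof.
move=> hd [-> [[-> ->]|[-> hx]]] [-> [[-> ->]|[-> hy]]]; split; case_minmax;
  by [lra | left; lra | right; lra].
Qed.

Definition lower_layer (d x : R) := x - d * (0 < x)%R%:R.

Lemma layer_lower_layer d x : 0 < d -> 0 <= x -> (0 < x -> d <= x) ->
  layer d x (0 < x)%R%:R (lower_layer d x).
Proof.
rewrite /lower_layer => hd hx hdx; split; first ring.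
have [hpos|] := boolP (0 < x); first by right; rewrite /= mulr1n; have := hdx hpos; lra.
by rewrite -leNgt /= => hx0; left; split; lra.
Qed.

Lemma layer_pos d x u x' : 0 < d -> layer d x u x' -> 0 < x' -> 0 < x.
Proof. by move=> hd [-> [[_ ->]|[-> _]]]; lra. Qed.

Variable n : nat.
Implicit Types (t p : 'I_n -> R) (F : ('I_n -> R) -> ('I_n -> R) -> R).

Definition layered_pair (d : R) t p ut up t' p' :=
  (forall i, layer d (t i) (ut i) (t' i)) /\ (forall i, layer d (p i) (up i) (p' i)).

Definition layer_additive F := forall d t p ut up t' p', 0 < d ->
  layered_pair d t p ut up t' p' -> F t p = d * F ut up + F t' p'.

Definition layer_preserving F := forall d t p ut up t' p', 0 < d ->
  layered_pair d t p ut up t' p' -> layer d (F t p) (F ut up) (F t' p').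

Lemma layer_preserving_test i : layer_preserving (fun t _ => t i).
Proof. by move=> d t p ut up t' p' _ []. Qed.

Lemma layer_preserving_proc i : layer_preserving (fun _ p => p i).
Proof. by move=> d t p ut up t' p' _ []. Qed.

Lemma layer_preserving_max F G : layer_preserving F -> layer_preserving G ->
  layer_preserving (fun t p => Num.max (F t p) (G t p)).
Proof. by move=> hF hG d *; apply: layer_max; [|apply: hF|apply: hG]. Qed.

Lemma layer_additive_min F G : layer_preserving F -> layer_preserving G ->
  layer_additive (fun t p => Num.min (F t p) (G t p)).
Proof. by move=> hF hG d *; apply: layer_min; [|apply: hF|apply: hG]. Qed.

Lemma layer_preserving_additive F : layer_preserving F -> layer_additive F.
Proof. by move=> hF d t p ut up t' p' hd hl; case: (hF _ _ _ _ _ _ _ hd hl). Qed.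

Lemma layer_additiveD F G : layer_additive F -> layer_additive G ->
  layer_additive (fun t p => F t p + G t p).
Proof.
move=> hF hG d t p ut up t' p' hd hl.
by rewrite (hF _ _ _ _ _ _ _ hd hl) (hG _ _ _ _ _ _ _ hd hl); ring.
Qed.

Lemma layer_additiveZ c F : layer_additive F -> layer_additive (fun t p => c * F t p).
Proof. by move=> hF d t p ut up t' p' hd hl; rewrite (hF _ _ _ _ _ _ _ hd hl); ring. Qed.

Lemma layer_additive_sum (F : 'I_n -> ('I_n -> R) -> ('I_n -> R) -> R) :
  (forall i, layer_additive (F i)) -> layer_additive (fun t p => \sum_i F i t p).
Proof.
move=> hF d t p ut up t' p' hd hl.
by rewrite mulr_sumr -big_split; apply: eq_bigr => i _; apply: hF.
Qed.

(* With [d = 1] and empty layers, additivity gives [F 0 0 = 2 * F 0 0]. *)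
Lemma layer_additive_eq0 F t p : layer_additive F ->
  (forall i, t i = 0) -> (forall i, p i = 0) -> F t p = 0.
Proof.
move=> hF t0 p0; set z := fun _ : 'I_n => 0 : R.
have hz x : x = 0 -> layer 1 x 0 0 by move->; split; [ring | left].
have Fz := hF 1 z z z z z z ltr01 (conj (fun=> hz _ erefl) (fun=> hz _ erefl)).
have Ftp := hF 1 t p z z z z ltr01 (conj (fun i => hz _ (t0 i)) (fun i => hz _ (p0 i))).
lra.
Qed.

Definition entry t p (o : 'I_n * bool) := if o.2 then p o.1 else t o.1.

Definition pos_entries t p := [set o | 0 < entry t p o].

Lemma entry_map (f : R -> R) t p o : entry (f \o t) (f \o p) o = f (entry t p o).
Proof. by case: o => i []. Qed.

Section LayerInduction.
Variables (F G : ('I_n -> R) -> ('I_n -> R) -> R) (c : R).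
Hypotheses (F_additive : layer_additive F) (G_additive : layer_additive G).
Hypothesis F_le_indicator : forall bt bp : 'I_n -> bool,
  F (fun i => (bt i)%:R) (fun i => (bp i)%:R)
  <= c * G (fun i => (bt i)%:R) (fun i => (bp i)%:R).

Lemma layer_ineq_ind m t p : (#|pos_entries t p| <= m)%N ->
  (forall o, 0 <= entry t p o) -> F t p <= c * G t p.
Proof.
elim: m t p => [|m IH] t p hm hge0.
  have tp0 o : entry t p o = 0.
    move: hm; rewrite leqn0 cards_eq0 => /eqP/setP/(_ o); rewrite !inE => /negbT.
    by rewrite -leNgt => h; apply/eqP; rewrite eq_le h hge0.
  have t0 i : t i = 0 := tp0 (i, false).
  have p0 i : p i = 0 := tp0 (i, true).
  by rewrite (layer_additive_eq0 F_additive t0 p0) (layer_additive_eq0 G_additive t0 p0) mulr0.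
case: (pickP (mem (pos_entries t p))) => [o0|none]; last first.
  by apply: IH => //; rewrite (eq_card0 none).
rewrite /= inE => ho0.
have [o1 hd o1_min] := @arg_minP _ _ _ o0 (fun o => 0 < entry t p o) (entry t p) ho0.
set d := entry t p o1 in hd o1_min.
set f := lower_layer d.
have hlo o : layer d (entry t p o) (0 < entry t p o)%R%:R (f (entry t p o)).
  exact: layer_lower_layer (o1_min o).
have hl : layered_pair d t p (fun i => (0 < t i)%R%:R) (fun i => (0 < p i)%R%:R)
                         (f \o t) (f \o p).
  by split=> i; [exact: (hlo (i, false)) | exact: (hlo (i, true))].
have fewer : (#|pos_entries (f \o t) (f \o p)| < #|pos_entries t p|)%N.
  apply: proper_card; apply/properP; split.
    by apply/subsetP => o; rewrite !inE entry_map; apply: layer_pos (hlo o).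
  by exists o1; rewrite !inE ?entry_map // /f /lower_layer hd mulr1 subrr ltxx.
have IH' : F (f \o t) (f \o p) <= c * G (f \o t) (f \o p).
  apply: IH; first by move: hm fewer; lia.
  by move=> o; rewrite entry_map; case: (hlo o) => _ [[_ ->]|[_]].
rewrite (F_additive hd hl) (G_additive hd hl).
have := ler_wpM2l (ltW hd) (F_le_indicator (fun i => 0 < t i) (fun i => 0 < p i)).
lra.
Qed.

Lemma layer_ineq t p : (forall i, 0 <= t i) -> (forall i, 0 <= p i) ->
  F t p <= c * G t p.
Proof.
by move=> ht hp; apply: (@layer_ineq_ind _ t p (leqnn _)) => -[i []]; [exact: hp | exact: ht].
Qed.

End LayerInduction.
End Layers.

(** * The two pairwise bounds *)

Section PairBounds.
Variables (R : realFieldType) (n : nat).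
Implicit Types (t p : 'I_n -> R).

Definition alg_pair_bound (lo : 'I_n -> 'I_n -> bool) t p : R :=
  \sum_i (t i + p i) + \sum_i \sum_j (Num.min (t i) (t j) + Num.min (p i) (p j)
     + 2 * ((lo i j)%:R * Num.min (t j) (p i))).

Definition opt_pair_bound t p : R :=
  \sum_i (t i + p i) + \sum_i \sum_j (3/4 * (Num.min (t i) (t j) + Num.min (p i) (p j))
     + 1/4 * Num.min (Num.max (t i) (p i)) (Num.max (t j) (p j))).

Lemma alg_pair_bound_additive lo : layer_additive (alg_pair_bound lo).
Proof.
rewrite /alg_pair_bound; apply: layer_additiveD; apply: layer_additive_sum => i.
  apply: layer_additiveD; apply: layer_preserving_additive.
    exact: layer_preserving_test.
  exact: layer_preserving_proc.
apply: layer_additive_sum => j.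
apply: layer_additiveD;
  [apply: layer_additiveD | apply: layer_additiveZ; apply: layer_additiveZ];
  apply: layer_additive_min;
  by [apply: layer_preserving_test | apply: layer_preserving_proc].
Qed.

Lemma opt_pair_bound_additive : layer_additive opt_pair_bound.
Proof.
rewrite /opt_pair_bound; apply: layer_additiveD; apply: layer_additive_sum => i.
  apply: layer_additiveD; apply: layer_preserving_additive.
    exact: layer_preserving_test.
  exact: layer_preserving_proc.
apply: layer_additive_sum => j.
apply: layer_additiveD; apply: layer_additiveZ; last first.
  by apply: layer_additive_min; apply: layer_preserving_max;
    by [apply: layer_preserving_test | apply: layer_preserving_proc].
apply: layer_additiveD; apply: layer_additive_min;
  by [apply: layer_preserving_test | apply: layer_preserving_proc].
Qed.

Lemma opt_pair_term_le (ti pi tj pj : R) : 0 <= ti -> 0 <= pi -> 0 <= tj -> 0 <= pj ->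
  3/4 * (Num.min ti tj + Num.min pi pj) + 1/4 * Num.min (Num.max ti pi) (Num.max tj pj)
  <= ti + pi.
Proof. by move=> *; case_minmax; lra. Qed.

Lemma min_indicator (x y : bool) : Num.min (x%:R : R) y%:R = (x && y)%:R.
Proof. by case: x; case: y; rewrite /= minEle ?lexx ?ler01 ?ler10. Qed.

Lemma max_indicator (x y : bool) : Num.max (x%:R : R) y%:R = (x || y)%:R.
Proof. by case: x; case: y; rewrite /= maxEle ?lexx ?ler01 ?ler10. Qed.

Lemma sum_mul_sqr (f : 'I_n -> R) : \sum_i \sum_j f i * f j = (\sum_i f i) ^+ 2.
Proof. by rewrite expr2 mulr_suml; apply: eq_bigr => i _; rewrite mulr_sumr. Qed.

Lemma sum_min_indicator (b : 'I_n -> bool) :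
  \sum_i \sum_j Num.min ((b i)%:R : R) (b j)%:R = (\sum_i ((b i)%:R : R)) ^+ 2.
Proof.
rewrite -sum_mul_sqr; apply: eq_bigr => i _; apply: eq_bigr => j _.
by rewrite min_indicator -mulnb natrM.
Qed.

Lemma sum_diag (f : 'I_n -> R) : \sum_i \sum_j ((i == j)%:R * f i) = \sum_i f i.
Proof.
apply: eq_bigr => i _; rewrite (bigD1 i) //= eqxx mul1r big1 ?addr0 //.
by move=> j /negbTE; rewrite eq_sym => ->; rewrite mul0r.
Qed.

Lemma sum2D (F G : 'I_n -> 'I_n -> R) :
  \sum_i \sum_j (F i j + G i j) = \sum_i \sum_j F i j + \sum_i \sum_j G i j.
Proof. by rewrite -big_split; apply: eq_bigr => i _; rewrite big_split. Qed.

Lemma sum2Z (c : R) (F : 'I_n -> 'I_n -> R) :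
  \sum_i \sum_j (c * F i j) = c * \sum_i \sum_j F i j.
Proof. by rewrite mulr_sumr; apply: eq_bigr => i _; rewrite mulr_sumr. Qed.

Lemma sum_pair_sym (F : 'I_n -> 'I_n -> R) :
  \sum_i \sum_j (F i j + F j i) = 2 * \sum_i \sum_j F i j.
Proof.
rewrite (eq_bigr (fun i => \sum_j F i j + \sum_j F j i)) => [|i _]; last by rewrite big_split.
by rewrite big_split /= [X in _ + X]exchange_big /= mulr2n mulrDl mul1r.
Qed.

Lemma alg_pair_bound_sym lo t p : alg_pair_bound lo t p =
  \sum_i \sum_j ((i == j)%:R * (t i + p i) + (Num.min (t i) (t j) + Num.min (p i) (p j)
    + ((lo i j)%:R * Num.min (t j) (p i) + (lo j i)%:R * Num.min (t i) (p j)))).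
Proof.
rewrite /alg_pair_bound -sum_diag [X in _ = X]sum2D; congr (_ + _).
rewrite [X in _ = X]sum2D (sum2D (fun i j => Num.min (t i) (t j) + Num.min (p i) (p j))).
by rewrite sum2Z (sum_pair_sym (fun i j => (lo i j)%:R * Num.min (t j) (p i))).
Qed.

(* [a], [b], [c] count the jobs with (t, p) = (1, 1), (0, 1), (1, 0). *)
Lemma type_count_ineq (a b c : R) : 0 <= a -> 0 <= b -> 0 <= c ->
  2 * a + b + c + (a + c) ^+ 2 + (a + b) ^+ 2 + ((a + b + c) ^+ 2 - b ^+ 2 - c ^+ 2 - a)
  <= 46/25 * (2 * a + b + c + 3/4 * ((a + c) ^+ 2 + (a + b) ^+ 2) + 1/4 * (a + b + c) ^+ 2).
Proof.
move=> ha hb hc; have h1 := sqr_ge0 (11 * a - 8 * (b + c)); have h2 := sqr_ge0 (b - c).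
move: h1 h2; rewrite !expr2; nra.
Qed.

Section StrictOrder.
Variable lo : 'I_n -> 'I_n -> bool.
Hypothesis lo_irr : forall i, lo i i = false.
Hypothesis lo_asym : forall i j, lo i j -> lo j i = false.

(* Of two distinct jobs at most one is counted, and none if both have
   tests only or processing only. *)
Lemma order_term_le (bt bp : 'I_n -> bool) :
  2 * \sum_i \sum_j ((lo i j)%:R * Num.min ((bt j)%:R : R) (bp i)%:R) <=
  (\sum_i ((bt i || bp i)%:R : R)) ^+ 2 - (\sum_i ((~~ bt i && bp i)%:R : R)) ^+ 2
  - (\sum_i ((bt i && ~~ bp i)%:R : R)) ^+ 2 - \sum_i ((bt i && bp i)%:R : R).
Proof.
rewrite -sum_pair_sym -!sum_mul_sqr -[X in _ - X]sum_diag -!sumrB.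
apply: ler_sum => i _; rewrite -!sumrB; apply: ler_sum => j _; rewrite !min_indicator.
have [<-|nij] := eqVneq i j.
  by rewrite lo_irr; case: (bt i); case: (bp i); rewrite /= ?(mulr0n, mulr1n); lra.
have [lij|lij] := boolP (lo i j); first rewrite (lo_asym lij);
  by case: (lo j i); case: (bt i); case: (bp i); case: (bt j); case: (bp j);
     rewrite /= ?(mulr0n, mulr1n); lra.
Qed.

Lemma alg_le_opt_indicator (bt bp : 'I_n -> bool) :
  alg_pair_bound lo (fun i => (bt i)%:R) (fun i => (bp i)%:R)
  <= 46/25 * opt_pair_bound (fun i => (bt i)%:R) (fun i => (bp i)%:R).
Proof.
set a := \sum_i ((bt i && bp i)%:R : R).
set b := \sum_i ((~~ bt i && bp i)%:R : R).
set c := \sum_i ((bt i && ~~ bp i)%:R : R).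
have ha : 0 <= a by apply: sumr_ge0.
have hb : 0 <= b by apply: sumr_ge0.
have hc : 0 <= c by apply: sumr_ge0.
have Et : \sum_i ((bt i)%:R : R) = a + c.
  rewrite -big_split; apply: eq_bigr => i _.
  by case: (bt i); case: (bp i); rewrite /= ?addr0 ?add0r.
have Ep : \sum_i ((bp i)%:R : R) = a + b.
  rewrite -big_split; apply: eq_bigr => i _.
  by case: (bt i); case: (bp i); rewrite /= ?addr0 ?add0r.
have Eu : \sum_i ((bt i || bp i)%:R : R) = a + b + c.
  rewrite -!big_split; apply: eq_bigr => i _.
  by case: (bt i); case: (bp i); rewrite /= ?addr0 ?add0r.
have := order_term_le bt bp; rewrite Eu -/a -/b -/c => Hlo.
set H := \sum_i \sum_j ((lo i j)%:R * Num.min ((bt j)%:R : R) (bp i)%:R) in Hlo.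
have Lsq : \sum_i \sum_j (Num.min ((bt i)%:R : R) (bt j)%:R + Num.min (bp i)%:R (bp j)%:R
      + 2 * ((lo i j)%:R * Num.min (bt j)%:R (bp i)%:R)) = (a + c) ^+ 2 + (a + b) ^+ 2 + 2 * H.
  by rewrite !sum2D sum2Z !sum_min_indicator Et Ep.
have Rsq : \sum_i \sum_j
      (3/4 * (Num.min ((bt i)%:R : R) (bt j)%:R + Num.min (bp i)%:R (bp j)%:R)
      + 1/4 * Num.min (Num.max (bt i)%:R (bp i)%:R) (Num.max (bt j)%:R (bp j)%:R))
      = 3/4 * ((a + c) ^+ 2 + (a + b) ^+ 2) + 1/4 * (a + b + c) ^+ 2.
  rewrite sum2D !sum2Z sum2D !sum_min_indicator Et Ep -Eu -sum_min_indicator.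
  by congr (_ + _ * _); apply: eq_bigr => i _; apply: eq_bigr => j _; rewrite !max_indicator.
rewrite /alg_pair_bound /opt_pair_bound Lsq Rsq big_split /= Et Ep.
have := type_count_ineq ha hb hc; lra.
Qed.

Lemma alg_le_opt_pair_bound t p : (forall i, 0 <= t i) -> (forall i, 0 <= p i) ->
  alg_pair_bound lo t p <= 46/25 * opt_pair_bound t p.
Proof.
exact: layer_ineq (alg_pair_bound_additive lo) opt_pair_bound_additive
  alg_le_opt_indicator t p.
Qed.

End StrictOrder.
End PairBounds.

(** * Upper bound for 1-SORT *)

Lemma sum_op (V : nmodType) (n : nat) (F : op n -> V) :
  \sum_o F o = \sum_i \sum_(b : bool) F (i, b).
Proof. by rewrite pair_bigA; apply: eq_bigr => -[i b]. Qed.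

Section Sort.
Variables (R : realType) (n : nat) (t p : 'I_n -> R) (s : seq (op n)).
Hypotheses (hs : beta_sort_run t p 1 s) (ht : forall j, 0 <= t j) (hp : forall j, 0 <= p j).

Lemma mem_run o : o \in s.
Proof. by case: hs => _ []. Qed.

Lemma index_run_inj x y : index x s = index y s -> x = y.
Proof. by move=> e; rewrite -(nth_index x (mem_run x)) e nth_index ?mem_run. Qed.

(* [y] is still queued when [x] is executed. *)
Lemma run_prio_le x y : (index x s < index y s)%N ->
  (y.2 -> (index (y.1, false) s < index x s)%N) -> prio t p 1 x <= prio t p 1 y.
Proof.
move=> hxy hy; case: hs => _ [_ step].
have hx : (index x s < size s)%N by rewrite index_mem mem_run.
have := step _ hx x; rewrite nth_index ?mem_run // => -[_]; apply.
rewrite /available in_take ?mem_run // -leqNgt ltnW //=.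
by case: y.2 hy => //= hy; rewrite in_take ?mem_run ?hy.
Qed.

Lemma test_before_proc j : (index (j, false) s < index (j, true) s)%N.
Proof.
case: hs => _ [_ step].
have hj : (index (j, true) s < size s)%N by rewrite index_mem mem_run.
have := step _ hj (j, true); rewrite nth_index ?mem_run //.
by case=> /andP [_ /=]; rewrite in_take ?mem_run.
Qed.

Definition test_order (i j : 'I_n) := (index (i, false) s < index (j, false) s)%N.

(* The part of job [i] executed by the time the processing of [j] completes. *)
Definition work_by (i j : 'I_n) : R :=
  (if (index (i, false) s <= index (j, true) s)%N then t i else 0) +
  (if (index (i, true) s <= index (j, true) s)%N then p i else 0).

Lemma run_cost_work_by : run_cost t p s = \sum_j \sum_i work_by i j.
Proof.
rewrite /run_cost; apply: eq_bigr => j _; rewrite /run_completion.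
case: hs => us _; rewrite big_uniq ?take_uniq //=.
rewrite (eq_bigl (fun o => (index o s <= index (j, true) s)%N)) => [|o]; last first.
  by rewrite in_take ?mem_run // ltnS.
rewrite big_mkcond sum_op.
by apply: eq_bigr => i _; rewrite big_bool /= /work_by /dur /= addrC.
Qed.

Lemma work_by_diag i : work_by i i = t i + p i.
Proof. by rewrite /work_by leqnn (ltnW (test_before_proc i)). Qed.

Lemma work_by_pair i j : test_order i j ->
  work_by i j + work_by j i <= Num.min (t i) (t j) + Num.min (p i) (p j) + Num.min (t j) (p i).
Proof.
rewrite /test_order => hFF.
have hi := test_before_proc i; have hj := test_before_proc j.
have ht_ij : t i <= t j.
  by have := run_prio_le hFF; rewrite /prio /= !mul1r; apply.
have nTF : index (i, true) s <> index (j, false) s by move=> /index_run_inj.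
have nTT : index (i, true) s <> index (j, true) s.
  by move=> /index_run_inj [eij]; move: hFF; rewrite eij ltnn.
have hpi := hp i; have hpj := hp j; have hti := ht i.
rewrite /work_by.
set Fi := index (i, false) s in hFF hi *; set Ti := index (i, true) s in hi nTF nTT *.
set Fj := index (j, false) s in hFF hj nTF *; set Tj := index (j, true) s in hj nTT *.
have [hTF|hFT] := ltnP Ti Fj.
  have hpt : p i <= t j by have := run_prio_le hTF; rewrite /prio /= mul1r; apply.
  by repeat case: ifP => ?; try lia; case_minmax; lra.
have {hFT} hFT : (Fj < Ti)%N by lia.
have htp : t j <= p i by have := run_prio_le hFT; rewrite /prio /= mul1r; apply.
have [hTT|hTT] := ltnP Ti Tj.
  have hpp : p i <= p j by have := run_prio_le hTT; rewrite /prio /=; apply.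
  by repeat case: ifP => ?; try lia; case_minmax; lra.
have {hTT} hTT : (Tj < Ti)%N by lia.
have hpp : p j <= p i by have := run_prio_le hTT; rewrite /prio /=; apply => _; lia.
by repeat case: ifP => ?; try lia; case_minmax; lra.
Qed.

Lemma test_order_irr i : test_order i i = false.
Proof. by rewrite /test_order ltnn. Qed.

Lemma test_order_asym i j : test_order i j -> test_order j i = false.
Proof. by rewrite /test_order => /ltnW; rewrite leqNgt => /negbTE. Qed.

Lemma work_by_sym_le i j : work_by i j + work_by j i <=
  (i == j)%:R * (t i + p i) + (Num.min (t i) (t j) + Num.min (p i) (p j)
  + ((test_order i j)%:R * Num.min (t j) (p i) + (test_order j i)%:R * Num.min (t i) (p j))).
Proof.
have [<-|nij] := eqVneq i j.
  rewrite work_by_diag test_order_irr !minxx /= mulr1n mulr0n !mul0r mul1r.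
  by have := hp i; have := ht i; lra.
rewrite /= mulr0n mul0r add0r.
have [lij|lji|eij] := ltngtP (index (i, false) s) (index (j, false) s).
- have lo : test_order i j := lij.
  rewrite lo (test_order_asym lo) mulr1n mul1r mul0r addr0.
  exact: work_by_pair.
- have lo : test_order j i := lji.
  rewrite lo (test_order_asym lo) mulr1n mul1r mul0r add0r addrC.
  by rewrite [Num.min (t i) _]minC [Num.min (p i) _]minC work_by_pair.
- by case: (index_run_inj eij) => eq_ij; rewrite eq_ij eqxx in nij.
Qed.

Lemma run_cost_le_alg_pair_bound : 2 * run_cost t p s <= alg_pair_bound test_order t p.
Proof.
rewrite run_cost_work_by exchange_big -sum_pair_sym alg_pair_bound_sym.
by apply: ler_sum => i _; apply: ler_sum => j _; exact: work_by_sym_le.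
Qed.

End Sort.

(** * Lower bound for an offline schedule *)

Section Offline.
Variables (R : realType) (n : nat) (t p : 'I_n -> R) (S : op n -> R).
Hypotheses (ht : forall j, 0 <= t j) (hp : forall j, 0 <= p j).
Hypothesis hS : feasible_schedule t p S.

Lemma dur_ge0 o : 0 <= dur t p o.
Proof. by case: o => i []; [exact: hp | exact: ht]. Qed.

(* Induction on [A], removing the operation that starts last. *)
Lemma sum_dur_le_ind m (A : {set op n}) (C : R) : (#|A| <= m)%N -> 0 <= C ->
  (forall o, o \in A -> 0 <= S o /\ S o + dur t p o <= C) -> \sum_(o in A) dur t p o <= C.
Proof.
elim: m A C => [|m IH] A C hm hC hA.
  by move: hm; rewrite leqn0 cards_eq0 => /eqP ->; rewrite big_set0.
case: (set_0Vmem A) => [->|[x0 hx0]]; first by rewrite big_set0.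
have [x hx x_last] := @arg_maxP _ _ _ x0 (fun o => o \in A) S hx0.
have hmx : (#|A :\ x| <= m)%N by move: hm; rewrite (cardsD1 x A) hx.
rewrite (big_setD1 x hx) /=.
have [hSx hxC] := hA x hx.
have [dx0|dx_neq0] := eqVneq (dur t p x) 0.
  rewrite dx0 add0r; apply: IH => // y; rewrite !inE => /andP [_]; exact: hA.
have hdx : 0 < dur t p x by rewrite lt_def dx_neq0 dur_ge0.
suff : \sum_(o in A :\ x) dur t p o <= S x by lra.
apply: IH => // y; rewrite !inE => /andP [hyx hy].
have [hSy _] := hA y hy; split => //.
have hle : S y <= S x := x_last y hy.
have hdy := dur_ge0 y.
case: hS => _ [_ disj].
by case: (disj y x hyx) => h; lra.
Qed.

Lemma sum_dur_le (A : {set op n}) (C : R) : 0 <= C ->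
  (forall o, o \in A -> 0 <= S o /\ S o + dur t p o <= C) -> \sum_(o in A) dur t p o <= C.
Proof. exact: sum_dur_le_ind. Qed.

Definition completion (j : 'I_n) := S (j, true) + p j.

Lemma completion_ge0 j : 0 <= completion j.
Proof. by case: hS => /(_ (j, true)) hS0 _; have := hp j; rewrite /completion; lra. Qed.

Lemma sum_completed_le j :
  \sum_i (if completion i <= completion j then t i + p i else 0) <= completion j.
Proof.
have := @sum_dur_le [set o : op n | completion o.1 <= completion j] _ (completion_ge0 j).
rewrite big_mkcond sum_op.
rewrite (eq_bigr (fun i => if completion i <= completion j then t i + p i else 0)) => [|i _].
  apply => -[i b]; rewrite inE /= => hij; case: hS => hS0 [hS1 _]; split; first exact: hS0.
  have := hS1 i; have := hp i; move: hij; rewrite /completion.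
  by case: b; rewrite /dur /=; lra.
by rewrite big_bool /= !inE /dur /=; case: ifP => _; rewrite ?addr0 // addrC.
Qed.

Lemma opt_pair_bound_le : opt_pair_bound t p <= 2 * schedule_cost p S.
Proof.
set Y := fun i j => if completion i <= completion j then t i + p i else 0.
have sumY : \sum_i \sum_j (Y i j + Y j i) <= 2 * schedule_cost p S.
  rewrite sum_pair_sym exchange_big ler_pM2l ?ltr0Sn //.
  by apply: ler_sum => j _; exact: sum_completed_le.
apply: le_trans sumY; rewrite /opt_pair_bound -sum_diag -sum2D.
apply: ler_sum => i _; apply: ler_sum => j _.
have ti0 := ht i; have pi0 := hp i; have tj0 := ht j; have pj0 := hp j.
have [<-|nij] := eqVneq i j.
  rewrite /Y lexx /= mulr1n mul1r !minxx; case_minmax; lra.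
rewrite /= mulr0n mul0r add0r /Y.
have hi := opt_pair_term_le ti0 pi0 tj0 pj0.
have hj := opt_pair_term_le tj0 pj0 ti0 pi0.
rewrite [Num.min (t j) _]minC [Num.min (p j) _]minC [Num.min (Num.max (t j) _) _]minC in hj.
by case: (lerP (completion i) (completion j)) => ?;
   case: (lerP (completion j) (completion i)) => ? /=; lra.
Qed.

End Offline.

Lemma rho_ge (R : realType) (mu nu : R) : 0 < mu -> 0 < nu -> 46/25 <= rho mu nu.
Proof.
move=> hmu hnu.
have [hnu_big|hnu_small] := leP (21/25) nu.
  have H : 46/25 <= 1 + nu by lra.
  by rewrite /rho !le_max H !orbT.
set Q := 2 / nu + 2 / (mu * nu).
have hQ : 2 / nu <= Q by rewrite lerDl divr_ge0 // mulr_ge0 // ltW.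
have E : 4 / nu + 4 / (mu * nu) = 2 * Q.
  by rewrite /Q; field; rewrite !gt_eqF.
have H : 46/25 <= (4 / nu + 4 / (mu * nu) + nu + nu ^+ 2 + 1) / (Q + nu + nu ^+ 2).
  have hnu2 := sqr_ge0 nu.
  have h2nu : 0 < 2 / nu by rewrite divr_gt0.
  rewrite E ler_pdivlMr; last lra.
  have key : 21/25 * (nu + nu ^+ 2) <= 1 + 4/25 * (2 / nu).
    have hinv : nu * nu^-1 = 1 by rewrite mulfV // gt_eqF.
    have := invr_gt0 nu; rewrite hnu expr2 => hinv0; nra.
  lra.
by rewrite /rho !le_max H !orbT.
Qed.

Theorem theorem1 (R : realType) (mu nu : R)
  (hmu : 1 < mu) (hnu0 : 0 < nu) (hnu1 : nu < 1) (hmunu : 1 < mu * nu)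
  (hcond : 1 + 1 / mu <= nu + nu ^+ 2)
  (n : nat) (t p : 'I_n -> R)
  (ht : forall j, 0 <= t j) (hp : forall j, 0 <= p j)
  (s : seq (op n)) (hs : beta_sort_run t p 1 s)
  (S : op n -> R) (hS : feasible_schedule t p S) :
  run_cost t p s <= rho mu nu * schedule_cost p S.
Proof.
have alg_ub := run_cost_le_alg_pair_bound hs ht hp.
have pair_ineq := alg_le_opt_pair_bound (@test_order_irr _ s) (@test_order_asym _ s) ht hp.
have opt_lb := opt_pair_bound_le ht hp hS.
have cost_ge0 : 0 <= schedule_cost p S.
  by apply: sumr_ge0 => j _; exact: (completion_ge0 hp hS).
have ratio := ler_wpM2r cost_ge0 (rho_ge (lt_trans ltr01 hmu) hnu0).
lra.
Qed.
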